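(* Let $A,B\in\mathbb{C}$ with $4A^3+27B^2\neq0$, and let $C=\{(x,y)\in\mathbb{C}^2: y^2=x^3+Ax+B\}$ be the corresponding smooth affine cubic curve. Then for every polynomial $P\in\mathbb{C}[x,y]$ the restriction $P|_C:C\to\mathbb{C}$ has at least one critical point on $C$, i.e. there is a point of $C$ at which the differential of $P|_C$ vanishes.
   Context: The curve $C$ is parametrized as $t\mapsto(x(t),y(t))$, $t\in\mathbb{C}\setminus\Gamma$, where $\Gamma\subset\mathbb{C}$ is a lattice of rank two and $x,y$ are $\Gamma$-periodic meromorphic (elliptic) functions, holomorphic on $\mathbb{C}\setminus\Gamma$ with poles at the points of $\Gamma$, satisfying $y^2=x^3+Ax+B$; this parametrization is a local biholomorphism onto $C$. *)

From HB Require Import structures.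
From mathcomp Require Import all_boot all_order all_algebra.
From mathcomp Require Import reals.
From mathcomp Require Import complex.
From mathcomp Require Import mpoly.
Set Implicit Arguments. Unset Strict Implicit. Unset Printing Implicit Defensive.
Import Order.TTheory GRing.Theory Num.Theory.
Local Open Scope ring_scope.

Definition pt2 (K : Type) (x y : K) : 'I_2 -> K :=
  fun i => if val i == 0%N then x else y.

Definition weierF (K : fieldType) (A B : K) : {mpoly K[2]} :=
  'X_(1 : 'I_2) ^+ 2 - 'X_(0 : 'I_2) ^+ 3 - A *: 'X_(0 : 'I_2) - B%:MP.

Definition on_curve (K : fieldType) (A B x y : K) : Prop :=
  y ^+ 2 = x ^+ 3 + A * x + B.

Definition dpoly (K : fieldType) (P : {mpoly K[2]}) (x y v0 v1 : K) : K :=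
  (mderiv (0 : 'I_2) P).@[pt2 x y] * v0 + (mderiv (1 : 'I_2) P).@[pt2 x y] * v1.

(* (x,y) is a critical point of P restricted to the smooth curve C:
   the differential of P vanishes on the tangent line T_(x,y) C = ker dF(x,y). *)
Definition crit_on_curve (K : fieldType) (A B : K) (P : {mpoly K[2]}) (x y : K) : Prop :=
  on_curve A B x y /\
  forall v0 v1 : K, dpoly (weierF A B) x y v0 v1 = 0 -> dpoly P x y v0 v1 = 0.

From HB Require Import structures.
From mathcomp Require Import all_boot all_order all_algebra.
From mathcomp Require Import reals complex mpoly.
From mathcomp Require Import ring zify.
Set Implicit Arguments. Unset Strict Implicit. Unset Printing Implicit Defensive.
Import Order.TTheory GRing.Theory Num.Theory.
Local Open Scope ring_scope.

(* Write f(x) = x^3 + A x + B.  On C every polynomial P agrees with p(x) + q(x) y,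
   and its derivative along the tangent field (2y, f'(x)) of C, which vanishes
   nowhere because f has simple roots, agrees with a(x) + b(x) y where b = 2 p' and
   a = 2 f q' + f' q.  Critical points of P on C are the zeros of a + b y on C, and
   these lie above the roots of the norm a^2 - b^2 f.  That norm is never a nonzero
   constant: if b != 0, b^2 f has odd degree >= 3 while a^2 has even degree; if
   b = 0, then q * a = (q^2 f)' forces deg a = deg q + 2 whenever q != 0. *)

Lemma mpoly_ind_ring (R : comNzRingType) (n : nat) (Q : {mpoly R[n]} -> Prop) :
  (forall c, Q c%:MP) -> (forall i, Q 'X_i) ->
  (forall p q, Q p -> Q q -> Q (p + q)) -> (forall p q, Q p -> Q q -> Q (p * q)) ->
  forall p, Q p.
Proof.
move=> QC QX QD QM; elim/mpolyind => [|c m p _ _ Qp]; first by rewrite -mpolyC0.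
apply: (QD) => //; rewrite -mul_mpolyC mpolyXE_id; apply: (QM) => //.
have Q1 : Q 1 by rewrite -mpolyC1.
apply: big_ind => [//|p' q'|i _]; first exact: QM.
elim: (m i) => [|k IHk]; first by rewrite expr0.
by rewrite exprS; apply: (QM).
Qed.

Lemma mderivXU (R : nzRingType) (n : nat) (i j : 'I_n) :
  mderiv i ('X_j : {mpoly R[n]}) = (i == j)%:R%:MP.
Proof.
rewrite mderivX mnm1E eq_sym; case: eqP => [->|_]; last by rewrite scale0r.
have -> : (U_(j) - U_(j) = 0)%MM by apply/mnmP => k; rewrite !mnmE subnn.
by rewrite mpolyX0 scale1r.
Qed.

Lemma size_deriv (R : numDomainType) (p : {poly R}) : size p^`() = (size p).-1.
Proof.
have [le_p1|gt_p1] := leqP (size p) 1.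
  by rewrite [p]size1_polyC // derivC size_poly0 size_polyC; case: (_ != 0).
have p_neq0 : p != 0 by rewrite -size_poly_gt0 ltnW.
have size_pred : (0 < (size p).-1)%N by rewrite -subn1 subn_gt0.
rewrite /deriv size_poly_eq // prednK // mulrn_eq0 -lead_coefE.
by rewrite lead_coef_eq0 (negPf p_neq0) orbF -lt0n.
Qed.

Lemma size_sqr (R : idomainType) (p : {poly R}) :
  p != 0 -> size (p ^+ 2) = ((size p).-1 * 2).+1.
Proof. by move=> p_neq0; rewrite -size_exp prednK // size_poly_gt0 expf_neq0. Qed.

Lemma size_sub_sqr_mul_neq1 (R : idomainType) (a b f : {poly R}) :
  odd (size f).-1 -> b != 0 -> size (a ^+ 2 - b ^+ 2 * f) != 1.
Proof.
move=> odd_deg_f b_neq0; set a2 := a ^+ 2; set b2f := b ^+ 2 * f.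
have f_neq0 : f != 0 by apply: contraTneq odd_deg_f => ->; rewrite size_poly0.
have size_b2f : size b2f = ((size b).-1 * 2 + size f)%N.
  by rewrite size_mul ?expf_neq0 // size_sqr.
have size_a2 : size a2 = 0%N \/ odd (size a2).
  have [a0|a_neq0] := eqVneq a 0; first by left; rewrite /a2 a0 expr2 mul0r size_poly0.
  by right; rewrite size_sqr //= oddM andbF.
have gt1_b2f : (1 < size b2f)%N.
  by rewrite size_b2f; move: odd_deg_f; case: (size f) => [|[|s]] //; lia.
case: (ltngtP (size a2) (size b2f)) => [lt_a2|gt_a2|eq_a2].
- by rewrite addrC size_polyDl size_polyN // neq_ltn gt1_b2f orbT.
- by rewrite size_polyDl ?size_polyN // neq_ltn (ltn_trans gt1_b2f gt_a2) orbT.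
- have size_f : size f = (size f).-1.+1 by rewrite prednK // size_poly_gt0.
  by move: size_a2; rewrite eq_a2 size_b2f size_f addnS /= oddD oddM andbF odd_deg_f; case.
Qed.

(* The polynomial below is (q^2 f)' / q. *)
Lemma size_deriv_sqr_mul_div (R : numDomainType) (f q : {poly R}) :
  (1 < size f)%N -> q != 0 ->
  size ((f * q^`()) *+ 2 + f^`() * q) = (size q + size f).-2.
Proof.
move=> gt1_f q_neq0; set a := _ + _.
have f_neq0 : f != 0 by rewrite -size_poly_gt0 ltnW.
have q_pos : (0 < size q)%N by rewrite size_poly_gt0.
have qa : q * a = (q ^+ 2 * f)^`() by rewrite /a derivM deriv_exp; ring.
have size_qa : size (q * a) = ((size q).-1 * 2 + size f).-1.
  by rewrite qa size_deriv size_mul ?expf_neq0 // size_sqr.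
have a_neq0 : a != 0.
  by apply: contra_eq_neq size_qa => ->; rewrite mulr0 size_poly0; lia.
move: size_qa q_pos gt1_f; rewrite size_mul //.
by move: (size a) (size q) (size f) => sa sq sf; lia.
Qed.

Lemma exists_zero_on_sqr_curve (K : numClosedFieldType) (f a b : {poly K}) :
  size (a ^+ 2 - b ^+ 2 * f) != 1 ->
  exists x y, y ^+ 2 = f.[x] /\ a.[x] + b.[x] * y = 0.
Proof.
move=> /closed_rootP [x /rootP root_x]; set y := sqrtC f.[x].
have y2 : y ^+ 2 = f.[x] := sqrtCK _.
have : (a.[x] + b.[x] * y) * (a.[x] + b.[x] * - y) = 0.
  by rewrite -root_x !hornerE -y2; ring.
move/eqP; rewrite mulf_eq0 => /orP[] /eqP zero; first by exists x, y.
by exists x, (- y); rewrite sqrrN.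
Qed.

Lemma linear_form_eq0_on_kernel (K : idomainType) (a b c d v0 v1 : K) :
  (c != 0) || (d != 0) -> a * c + b * d = 0 -> - d * v0 + c * v1 = 0 ->
  a * v0 + b * v1 = 0.
Proof.
move=> cd_neq0 dP_cd dF_v.
have c_dP : c * (a * v0 + b * v1) = v0 * (a * c + b * d) + b * (- d * v0 + c * v1).
  by ring.
have d_dP : d * (a * v0 + b * v1) = v1 * (a * c + b * d) - a * (- d * v0 + c * v1).
  by ring.
rewrite dP_cd dF_v !mulr0 addr0 subr0 in c_dP d_dP.
by case/orP: cd_neq0 => nz; apply/eqP;
  [move/eqP: c_dP | move/eqP: d_dP]; rewrite mulf_eq0 (negPf nz).
Qed.

Section WeierstrassCubic.
Variable K : numClosedFieldType.
Variables A B : K.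

(* Locked so that rewriting with [hornerD] or [derivD] never unfolds it. *)
Definition weierf : {poly K} := locked ('X^3 + A *: 'X + B%:P).

Lemma horner_weierf x : weierf.[x] = x ^+ 3 + A * x + B.
Proof. by rewrite /weierf -lock !hornerE. Qed.

Lemma deriv_weierf : weierf^`() = 3%:R *: 'X^2 + A%:P.
Proof.
by rewrite /weierf -lock !derivD derivZ derivX derivC derivXn addr0 alg_polyC scaler_nat.
Qed.

Lemma horner_deriv_weierf x : weierf^`().[x] = 3%:R * x ^+ 2 + A.
Proof. by rewrite deriv_weierf !hornerE. Qed.

Lemma size_weierf : size weierf = 4%N.
Proof.
rewrite /weierf -lock -addrA size_polyDl size_polyXn //.
rewrite (leq_ltn_trans (size_polyD _ _)) // gtn_max.
by rewrite (leq_ltn_trans (size_scale_leq _ _)) ?size_polyX // (leq_ltn_trans (size_polyC_leq1 _)).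
Qed.

Lemma on_curveE x y : on_curve A B x y <-> y ^+ 2 = weierf.[x].
Proof. by rewrite /on_curve horner_weierf. Qed.

Lemma dpoly_weierF x y v0 v1 :
  dpoly (weierF A B) x y v0 v1 = - weierf^`().[x] * v0 + 2 * y * v1.
Proof.
rewrite /dpoly /weierF horner_deriv_weierf [_ ^+ 3]exprS !expr2.
rewrite !(mderivB, mderivZ, mderivC, mderivM, mderivXU) /=.
by rewrite !(mevalB, mevalD, mevalM, mevalZ, mevalC, mevalXU) /pt2 /=; ring.
Qed.

(* The second conjunct is the derivative of p(x) + q(x) y along (2y, f'(x)),
   simplified with y^2 = f(x). *)
Definition curve_normal_form (P : {mpoly K[2]}) (p q : {poly K}) : Prop :=
  forall x y, on_curve A B x y ->
    P.@[pt2 x y] = p.[x] + q.[x] * y /\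
    dpoly P x y (2 * y) weierf^`().[x] =
      2 * p^`().[x] * y + (2 * weierf.[x] * q^`().[x] + weierf^`().[x] * q.[x]).

Lemma curve_normal_formC c : curve_normal_form c%:MP c%:P 0.
Proof.
move=> x y _; rewrite /dpoly !mderivC !mevalC derivC deriv0 !horner0 hornerC.
by split; ring.
Qed.

Lemma curve_normal_formX (i : 'I_2) :
  curve_normal_form 'X_i (if i == 0 then 'X else 0) (if i == 0 then 0 else 1).
Proof.
move=> x y _; rewrite /dpoly !mderivXU !mevalC mevalXU /pt2.
case: i => [[|[|//]] lt_i2] /=; rewrite ?derivX ?deriv0 -?polyC1 ?derivC.
  by rewrite hornerX !hornerC; split; ring.
by rewrite !hornerC; split; ring.
Qed.

Lemma curve_normal_formD P Q p1 q1 p2 q2 :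
  curve_normal_form P p1 q1 -> curve_normal_form Q p2 q2 ->
  curve_normal_form (P + Q) (p1 + p2) (q1 + q2).
Proof.
move=> nfP nfQ x y on_xy; have [P_xy dP] := nfP x y on_xy; have [Q_xy dQ] := nfQ x y on_xy.
move: dP dQ; rewrite /dpoly !mderivD !mevalD P_xy Q_xy !derivD !hornerD => dP dQ.
split; first ring.
by rewrite mulrDl (mulrDl (meval _ _)) addrACA dP dQ; ring.
Qed.

Lemma curve_normal_formM P Q p1 q1 p2 q2 :
  curve_normal_form P p1 q1 -> curve_normal_form Q p2 q2 ->
  curve_normal_form (P * Q) (p1 * p2 + q1 * q2 * weierf) (p1 * q2 + p2 * q1).
Proof.
move=> nfP nfQ x y on_xy; have [P_xy dP] := nfP x y on_xy; have [Q_xy dQ] := nfQ x y on_xy.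
have y2 := proj1 (on_curveE _ _) on_xy.
have -> : dpoly (P * Q) x y (2 * y) weierf^`().[x] =
    Q.@[pt2 x y] * dpoly P x y (2 * y) weierf^`().[x] +
    P.@[pt2 x y] * dpoly Q x y (2 * y) weierf^`().[x].
  by rewrite /dpoly !mderivM !mevalD !mevalM; ring.
rewrite mevalM P_xy Q_xy dP dQ !derivD !derivM !(hornerD, hornerM) -y2.
by split; ring.
Qed.

Lemma exists_curve_normal_form P : exists p q, curve_normal_form P p q.
Proof.
elim/mpoly_ind_ring: P => [c|i|P Q [p1 [q1 nfP]] [p2 [q2 nfQ]]|P Q [p1 [q1 nfP]] [p2 [q2 nfQ]]].
- by exists c%:P, 0; apply: curve_normal_formC.
- by eexists; eexists; apply: curve_normal_formX.
- by eexists; eexists; apply: curve_normal_formD nfP nfQ.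
- by eexists; eexists; apply: curve_normal_formM nfP nfQ.
Qed.

Lemma size_tangent_norm_neq1 (p q : {poly K}) :
  size (((weierf * q^`()) *+ 2 + weierf^`() * q) ^+ 2 - (p^`() *+ 2) ^+ 2 * weierf) != 1.
Proof.
set a := (weierf * _) *+ 2 + _; have [p'0|p'_neq0] := eqVneq p^`() 0; last first.
  by rewrite size_sub_sqr_mul_neq1 ?size_weierf // -scaler_nat scale_poly_eq0 pnatr_eq0.
rewrite p'0 mul0rn [0 ^+ 2]expr2 !mul0r subr0.
have [q0|q_neq0] := eqVneq q 0.
  by rewrite /a q0 deriv0 !mulr0 mul0rn addr0 expr2 mul0r size_poly0.
have size_a : size a = (size q).+2.
  by rewrite size_deriv_sqr_mul_div ?size_weierf // addnC.
have a_neq0 : a != 0 by rewrite -size_poly_gt0 size_a.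
by rewrite (size_sqr a_neq0) size_a.
Qed.

Section Nonsingular.
Hypothesis disc_neq0 : 4 * A ^+ 3 + 27 * B ^+ 2 != 0.

Lemma weierf_root_simple x : weierf.[x] = 0 -> weierf^`().[x] != 0.
Proof.
rewrite horner_weierf horner_deriv_weierf => fx0; apply: contra_neq disc_neq0 => f'x0.
have eA : A = (3%:R * x ^+ 2 + A) - 3%:R * x ^+ 2 by ring.
have eB : B = (x ^+ 3 + A * x + B) - x ^+ 3 - A * x by ring.
rewrite f'x0 in eA; rewrite fx0 in eB.
by rewrite eB eA; ring.
Qed.

Lemma crit_on_curve_of_tangent (P : {mpoly K[2]}) x y :
  on_curve A B x y -> dpoly P x y (2 * y) weierf^`().[x] = 0 ->
  crit_on_curve A B P x y.
Proof.
move=> on_xy dP_tangent; split => // v0 v1; rewrite dpoly_weierF => dF_v.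
apply: (linear_form_eq0_on_kernel _ dP_tangent dF_v).
have [y0|y_neq0] := eqVneq y 0.
  by rewrite weierf_root_simple ?orbT // -(proj1 (on_curveE _ _) on_xy) y0 expr0n.
by rewrite mulf_neq0 // pnatr_eq0.
Qed.
End Nonsingular.
End WeierstrassCubic.

Theorem mainTheorem6 (R : realType) (A B : R[i]) (P : {mpoly R[i][2]}) :
  4 * A ^+ 3 + 27 * B ^+ 2 != 0 ->
  exists x y : R[i], crit_on_curve A B P x y.
Proof.
move=> disc_neq0; have [p [q nf_P]] := exists_curve_normal_form A B P.
have [x [y [on_xy tangent_zero]]] := exists_zero_on_sqr_curve (size_tangent_norm_neq1 A B p q).
have {}on_xy : on_curve A B x y by apply/on_curveE.
exists x, y; apply: crit_on_curve_of_tangent => //.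
have [_ ->] := nf_P x y on_xy.
by rewrite -tangent_zero !(hornerD, hornerM, hornerMn); ring.
Qed.
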